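(* Let $q\ge2$, $N=2^q$, $b>0$, $h=b/N$, and let $A_q=h^2B_h$, where $B_h=(b_{i,j})_{i,j=1}^{N-1}$ is the symmetric Toeplitz matrix with $b_{i,i}=\frac{2N}3-1$, $b_{i,j}=\frac N6-1$ if $|i-j|=1$, and $b_{i,j}=-1$ if $|i-j|\ge2$. For $k=q,q-1,\dots,2$ define $A_{k-1}=I_k^{k-1}A_kI_{k-1}^k$, where $A_k$ has size $n_k=2^k-1$, $I_k^{k-1}:\mathbb R^{n_k}\to\mathbb R^{n_{k-1}}$ is $(I_k^{k-1}\nu)_i=\frac14(\nu_{2i-1}+2\nu_{2i}+\nu_{2i+1})$ and $I_{k-1}^k=2(I_k^{k-1})^T$. Let $D_k$ be the diagonal of $A_k$, let $\eta_0$ satisfy $\lambda_{\max}(D_k^{-1}A_k)\le\eta_0<3$ for all $1\le k\le q$, let $0<\omega<2/\eta_0$, let $0<\eta\le\omega(2-\omega\eta_0)$, and let $K_k=I-\omega D_k^{-1}A_k$. Then for every $1\le k\le q$, $\|K_k\nu\|_{A_k}^2\le\|\nu\|_{A_k}^2-\eta\|A_k\nu\|_{D_k^{-1}}^2$ for all $\nu\in\mathbb R^{n_k}$, and for every $2\le k\le q$, $$\|K_kT^k\|_{A_k}\le\sqrt{1-\eta/4}<1,\qquad T^k=I-I_{k-1}^kA_{k-1}^{-1}I_k^{k-1}A_k.$$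
   Context: For a symmetric positive definite $M$, $\|\nu\|_M=\sqrt{\nu^TM\nu}$ and for a matrix $X$, $\|X\|_M$ is the induced operator norm. $K_k$ is the damped Jacobi iteration matrix on level $k$, $T^k$ the coarse grid correction operator between levels $k$ and $k-1$ (Galerkin coarse matrices), and $K_kT^k$ the two-level iteration matrix at level $k$ of the multigrid hierarchy. $A_q$ is the piecewise linear finite element stiffness matrix of the nonlocal operator $u\mapsto\int_0^b[u(x)-u(y)]dy$ with zero exterior condition. *)

From HB Require Import structures.
From mathcomp Require Import all_boot all_order all_algebra.
From mathcomp Require Import classical_sets reals.
Set Implicit Arguments. Unset Strict Implicit. Unset Printing Implicit Defensive.
Import Order.TTheory GRing.Theory Num.Theory.
Local Open Scope ring_scope.
Local Open Scope classical_set_scope.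

Section Defs.
Variable R : realType.

Definition Afine (b : R) (k : nat) : 'M[R]_(2 ^ k - 1) :=
  let N : R := (2 ^ k)%:R in
  let h : R := b / N in
  \matrix_(i, j)
    (h ^+ 2 *
     (if i == j then 2 * N / 3 - 1
      else if ((i : nat) == j.+1) || ((j : nat) == i.+1) then N / 6 - 1
      else -1)).

(* Restriction I_{k+1}^{k} : R^{n_{k+1}} -> R^{n_k}, n_k = 2^k - 1.
   1-based (I v)_i = (v_{2i-1} + 2 v_{2i} + v_{2i+1})/4, written 0-based. *)
Definition restr (k : nat) : 'M[R]_(2 ^ k - 1, 2 ^ k.+1 - 1) :=
  \matrix_(i, j)
    (if (j : nat) == (2 * i)%N.+1 then 1 / 2
     else if ((j : nat) == (2 * i)%N) || ((j : nat) == (2 * i)%N.+2) then 1 / 4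
     else 0).

Definition prolong (k : nat) : 'M[R]_(2 ^ k.+1 - 1, 2 ^ k - 1) :=
  2 *: (restr k)^T.

Definition coarsen (k : nat) (M : 'M[R]_(2 ^ k.+1 - 1)) : 'M[R]_(2 ^ k - 1) :=
  restr k *m M *m prolong k.

Fixpoint Aup (b : R) (m k : nat) : 'M[R]_(2 ^ k - 1) :=
  match m with
  | 0 => Afine b k
  | m'.+1 => coarsen (Aup b m' k.+1)
  end.

Definition Alev (b : R) (q k : nat) : 'M[R]_(2 ^ k - 1) := Aup b (q - k) k.

Definition Dg n (M : 'M[R]_n) : 'M[R]_n := diag_mx (\row_i M i i).

Definition Kjac n (omega : R) (M : 'M[R]_n) : 'M[R]_n :=
  1%:M - omega *: (invmx (Dg M) *m M).

Definition mnorm n (M : 'M[R]_n) (v : 'cV[R]_n) : R :=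
  Num.sqrt ((v^T *m M *m v) 0 0).

Definition opnorm n (M X : 'M[R]_n) : R :=
  sup [set r | exists v : 'cV[R]_n, mnorm M v <= 1 /\ r = mnorm M (X *m v)].

Definition Tcgc (b : R) (q k : nat) : 'M[R]_(2 ^ k.+1 - 1) :=
  1%:M - prolong k *m invmx (Alev b q k) *m restr k *m Alev b q k.+1.

End Defs.

From HB Require Import structures.
From mathcomp Require Import all_boot all_order all_algebra.
From mathcomp Require Import classical_sets reals complex.
From mathcomp Require Import zify ring lra.
Import Order.TTheory GRing.Theory Num.Theory.
Set Implicit Arguments. Unset Strict Implicit. Unset Printing Implicit Defensive.
Local Open Scope ring_scope.

(* Every A_k is a positive multiple of B_k := 2^k M_k - 11^T, M_k the mass
   matrix of the unit mesh, because Galerkin coarsening maps B_(k+1) to 2 B_k.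
   So D_k = d I is scalar, K_k = I - (omega/d) A_k, and the smoothing estimate
   is the Rayleigh bound (A g, g) <= eta0 d |g|^2 applied to g = A_k v.
   The form of B_k is 2^k times the integral of (u - mean u)^2 for the piecewise
   linear u through the nodal values; comparing u at each fine-only node with
   the mean of its two neighbours bounds |u - P (injection u)|^2 by
   (4/d) (A u, u).  By Galerkin orthogonality the output w = T v of the coarse
   grid correction then satisfies (A w, w) <= (4/d) |A w|^2, and one smoothing
   step removes the fraction eta/4 of its energy.  Finally D^-1 A has unit
   diagonal, so eta0 >= 1 and eta <= omega (2 - omega eta0) <= 1. *)

Section Forms.
Variable R : realFieldType.
Implicit Types (n : nat).

Definition form n (A : 'M[R]_n) (x y : 'cV[R]_n) : R := (x^T *m A *m y) 0 0.
Definition vdot n (x y : 'cV[R]_n) : R := (x^T *m y) 0 0.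

Lemma formZl n (A : 'M_n) a x y : form A (a *: x) y = a * form A x y.
Proof. by rewrite /form linearZ /= -!scalemxAl mxE. Qed.

Lemma formZr n (A : 'M_n) a x y : form A x (a *: y) = a * form A x y.
Proof. by rewrite /form -scalemxAr mxE. Qed.

Lemma form_scale n (A : 'M_n) a x y : form (a *: A) x y = a * form A x y.
Proof. by rewrite /form -scalemxAr -scalemxAl mxE. Qed.

Lemma form_scalar n a (x y : 'cV_n) : form a%:M x y = a * vdot x y.
Proof. by rewrite /form mul_mx_scalar -scalemxAl mxE. Qed.

Lemma form_mulmxl n p (A : 'M_n) (P : 'M_(n, p)) w y :
  form A (P *m w) y = vdot w (P^T *m A *m y).
Proof. by rewrite /form /vdot trmx_mul !mulmxA. Qed.

Lemma form_sym n (A : 'M_n) x y : A^T = A -> form A x y = form A y x.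
Proof.
move=> Asym; have tr11 (M : 'M[R]_1) : M 0 0 = M^T 0 0 by rewrite mxE.
by rewrite /form tr11 !trmx_mul trmxK Asym mulmxA.
Qed.

Lemma form_vdot n (A : 'M_n) x y : A^T = A -> form A x y = vdot (A *m x) y.
Proof. by move=> Asym; rewrite /form /vdot trmx_mul Asym. Qed.

Lemma formDl n (A : 'M_n) x y z : form A (x + y) z = form A x z + form A y z.
Proof. by rewrite /form linearD /= !mulmxDl mxE. Qed.

Lemma formDr n (A : 'M_n) x y z : form A x (y + z) = form A x y + form A x z.
Proof. by rewrite /form mulmxDr mxE. Qed.

Lemma form_sqrD n (A : 'M_n) x y : A^T = A ->
  form A (x + y) (x + y) = form A x x + 2 * form A x y + form A y y.
Proof.
by move=> Asym; rewrite formDl !formDr (form_sym y x Asym) mulr2n mulrDl mul1r !addrA.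
Qed.

Lemma vdotE n (x y : 'cV_n) : vdot x y = \sum_i x i 0 * y i 0.
Proof. by rewrite /vdot mxE; apply: eq_bigr => i _; rewrite mxE. Qed.

Lemma vdot_ge0 n (x : 'cV_n) : 0 <= vdot x x.
Proof. by rewrite vdotE sumr_ge0 // => i _; rewrite -expr2 sqr_ge0. Qed.

Lemma vdot_young n (x y : 'cV_n) t : 0 < t -> 2 * vdot x y <= t * vdot x x + vdot y y / t.
Proof.
move=> t0; rewrite !vdotE !mulr_sumr mulr_suml -big_split; apply: ler_sum => i _ /=.
rewrite -subr_ge0.
have -> : t * (x i 0 * x i 0) + y i 0 * y i 0 / t - 2 * (x i 0 * y i 0) =
  (t * x i 0 - y i 0) ^+ 2 / t by field; rewrite gt_eqF.
by rewrite divr_ge0 ?sqr_ge0 // ltW.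
Qed.

Lemma form_le_approx n p (A : 'M_n) (P : 'M_(n, p)) u ec c :
  A^T = A -> 0 < c -> (forall w, form A (P *m w) u = 0) ->
  vdot (u - P *m ec) (u - P *m ec) <= c * form A u u ->
  form A u u <= c * vdot (A *m u) (A *m u).
Proof.
move=> Asym c0 orth approx; set r := u - P *m ec in approx.
have urP : form A u u = vdot (A *m u) r.
  rewrite -form_vdot // -{2}(subrK (P *m ec) u) formDr.
  by rewrite (form_sym _ (P *m ec)) // orth addr0.
have := vdot_young (A *m u) r c0; rewrite -urP.
have : vdot r r / c <= form A u u by rewrite ler_pdivrMr // mulrC.
lra.
Qed.

Lemma form_pd_unitmx n (A : 'M_n) : (forall x, form A x x = 0 -> x = 0) -> A \in unitmx.
Proof.
move=> Apd; rewrite unitmxE unitfE; apply/det0P => -[v v_nz vA].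
suff : v^T = 0 by move/(congr1 trmx); rewrite trmxK trmx0 => v0; rewrite v0 eqxx in v_nz.
by apply: Apd; rewrite /form trmxK vA mul0mx mxE.
Qed.

End Forms.

Section Rayleigh.
Local Open Scope sesquilinear_scope.
Lemma spectral_diag_eigenvalue (C : numClosedFieldType) n (A : 'M[C]_n) j :
  A \is normalmx -> eigenvalue A (spectral_diag A 0 j).
Proof.
move=> /orthomx_spectralP defA; set P := spectralmx A in defA.
have Pu : P \in unitmx by apply: spectral_unit.
apply/eigenvalueP; exists (row j P).
  rewrite {1}defA -row_mul !mulmxA mulmxV // mul1mx row_mul -row_mul mul_diag_mx.
  by apply/rowP => k; rewrite !mxE.
apply/eqP => /(congr1 (mulmx^~ (invmx P))).
rewrite -row_mul mulmxV // mul0mx => /rowP/(_ j)/eqP.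
by rewrite !mxE eqxx oner_eq0.
Qed.

Lemma normalmx_form_le (C : numClosedFieldType) n (A : 'M[C]_n) (eta : C) (u : 'cV[C]_n) :
  A \is normalmx -> (forall j, spectral_diag A 0 j <= eta) ->
  (u^t* *m A *m u) 0 0 <= eta * (u^t* *m u) 0 0.
Proof.
move=> /orthomx_spectralP defA Aeta; set P := spectralmx A in defA.
have Pu : P \is unitarymx by apply: spectral_unitarymx.
set w := P *m u.
have wt : w^t* = u^t* *m P^t* by rewrite /w trmx_mul map_mxM.
have -> : u^t* *m A *m u = w^t* *m diag_mx (spectral_diag A) *m w.
  by rewrite {1}defA wt invmx_unitary // !mulmxA.
have -> : u^t* *m u = w^t* *m w.
  by rewrite wt -invmx_unitary // /w mulmxA -(mulmxA _ _ P) mulVmx ?unitarymx_unit // mulmx1.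
rewrite mul_mx_diag !mxE mulr_sumr; apply: ler_sum => k _; rewrite !mxE.
by rewrite mulrAC [eta * _]mulrC ler_wpM2l // mulrC mul_conjC_ge0.
Qed.

Lemma symmx_form_le (R : rcfType) n (S : 'M[R]_n) (eta : R) (u : 'cV[R]_n) :
  S^T = S -> (forall a, eigenvalue S a -> a <= eta) ->
  form S u u <= eta * vdot u u.
Proof.
(* The spectral theorem is available over the algebraic closure R[i]. *)
move=> Ssym Seta; rewrite /form /vdot; pose f := real_complex R; pose SC := map_mx f S.
have fC x : (f x)^* = f x by rewrite conj_Creal // complex_real.
have herm : SC \is hermsymmx.
  apply/is_hermitianmxP; rewrite expr0 scale1r; apply/matrixP => i j.
  by rewrite !mxE fC -{1}Ssym mxE.
have SCeta j : spectral_diag SC 0 j <= f eta.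
  have /mxOverP/(_ 0 j) := hermitian_spectral_diag_real herm.
  have := spectral_diag_eigenvalue j (hermitian_normalmx herm).
  case: (spectral_diag SC 0 j) => x y; rewrite complex_real => + /eqP y0.
  by rewrite y0 -[Complex x 0]/(f x) eigenvalue_map lecR => /Seta.
have uft : (map_mx f u)^t* = map_mx f u^T by apply/matrixP => i j; rewrite !mxE fC.
have := normalmx_form_le (map_mx f u) (hermitian_normalmx herm) SCeta.
by rewrite uft -!map_mxM !mxE -rmorphM lecR.
Qed.

Lemma symmx_diag_le (R : rcfType) n (S : 'M[R]_n) (eta : R) i :
  S^T = S -> (forall a, eigenvalue S a -> a <= eta) -> S i i <= eta.
Proof.
move=> Ssym /(symmx_form_le (delta_mx i 0) Ssym).
by rewrite /form /vdot trmx_delta mul_delta_mx -rowE -colE !mxE eqxx mulr1.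
Qed.

End Rayleigh.

Section TwoGrid.
Variable R : realType.
Implicit Types (n p : nat).

Lemma Kjac_scalar_diag n (A : 'M[R]_n) omega d :
  Dg A = d%:M -> Kjac omega A = 1%:M - (omega / d) *: A.
Proof. by move=> DA; rewrite /Kjac DA invmx_scalar mul_scalar_mx scalerA. Qed.

Lemma jacobi_smoothing n (A : 'M[R]_n) d omega eta0 eta v :
  A^T = A -> 0 < d -> Dg A = d%:M ->
  (forall a, eigenvalue (invmx (Dg A) *m A) a -> a <= eta0) ->
  eta <= omega * (2 - omega * eta0) ->
  form A (Kjac omega A *m v) (Kjac omega A *m v)
    <= form A v v - eta / d * vdot (A *m v) (A *m v).
Proof.
move=> Asym d0 DA Aeta0 eta_le; set g := A *m v.
have ray : form A g g / d <= eta0 * vdot g g.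
  rewrite DA invmx_scalar mul_scalar_mx in Aeta0.
  have := symmx_form_le g _ Aeta0; rewrite form_scale mulrC; apply.
  by rewrite linearZ /= Asym.
have Kv : Kjac omega A *m v = v + (- (omega / d)) *: g.
  by rewrite (Kjac_scalar_diag _ DA) mulmxBl mul1mx -scalemxAl scaleNr.
have vg : form A v g = vdot g g by rewrite form_vdot.
rewrite Kv form_sqrD // !formZr !formZl vg.
have G0 := vdot_ge0 g.
have : omega ^+ 2 / d * (form A g g / d) <= omega ^+ 2 / d * (eta0 * vdot g g).
  by rewrite ler_wpM2l // divr_ge0 ?sqr_ge0 // ltW.
have : eta / d * vdot g g <= omega * (2 - omega * eta0) / d * vdot g g.
  by rewrite ler_wpM2r // ler_pM2r ?invr_gt0.
lra.
Qed.

Lemma jacobi_smoothing_mnorm n (A : 'M[R]_n) d omega eta0 eta v :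
  A^T = A -> (forall x, 0 <= form A x x) -> 0 < d -> Dg A = d%:M ->
  (forall a, eigenvalue (invmx (Dg A) *m A) a -> a <= eta0) ->
  eta <= omega * (2 - omega * eta0) ->
  mnorm A (Kjac omega A *m v) ^+ 2
    <= mnorm A v ^+ 2 - eta * mnorm (invmx (Dg A)) (A *m v) ^+ 2.
Proof.
move=> Asym Apsd d0 DA Aeta0 eta_le.
rewrite /mnorm -!/(form _ _ _) !sqr_sqrtr // DA invmx_scalar form_scalar ?mulr_ge0 ?vdot_ge0 //.
  by rewrite mulrA; exact: (jacobi_smoothing v Asym d0 DA Aeta0 eta_le).
by rewrite invr_ge0 ltW.
Qed.

Lemma jacobi_eigen_bound_ge1 n (A : 'M[R]_n) d eta0 (i : 'I_n) :
  A^T = A -> d != 0 -> Dg A = d%:M ->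
  (forall a, eigenvalue (invmx (Dg A) *m A) a -> a <= eta0) -> 1 <= eta0.
Proof.
move=> Asym d_nz DA /symmx_diag_le; rewrite DA invmx_scalar mul_scalar_mx => /(_ i).
have Aii : A i i = d by have := congr1 (fun M : 'M[R]_n => M i i) DA; rewrite !mxE eqxx.
by rewrite mxE Aii mulVf //; apply; rewrite linearZ /= Asym.
Qed.

Lemma jacobi_rate_le1 (omega eta0 : R) : 1 <= eta0 -> omega * (2 - omega * eta0) <= 1.
Proof. by move=> eta0_ge1; have := sqr_ge0 (1 - omega); have := sqr_ge0 omega; nra. Qed.

Definition cgc n p (A : 'M[R]_n) (Rr : 'M_(p, n)) (P : 'M_(n, p)) : 'M_n :=
  1%:M - P *m invmx (Rr *m A *m P) *m Rr *m A.

Section CoarseGridCorrection.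
Variables (n p : nat) (A : 'M[R]_n) (Rr : 'M[R]_(p, n)) (P : 'M[R]_(n, p)) (c : R).
Hypotheses (Asym : A^T = A) (PRr : P^T = c *: Rr) (Ac_unit : Rr *m A *m P \in unitmx).

Lemma cgc_orth v w : form A (P *m w) (cgc A Rr P *m v) = 0.
Proof.
rewrite form_mulmxl PRr -!scalemxAl.
have -> : Rr *m A *m (cgc A Rr P *m v) = 0.
  by rewrite /cgc mulmxBl mul1mx mulmxBr !mulmxA mulmxV // mul1mx subrr.
by rewrite scaler0 /vdot mulmx0 mxE.
Qed.

Lemma cgc_energy_le v : (forall x, 0 <= form A x x) ->
  form A (cgc A Rr P *m v) (cgc A Rr P *m v) <= form A v v.
Proof.
move=> Apsd; set z := invmx (Rr *m A *m P) *m Rr *m A *m v.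
have vE : v = cgc A Rr P *m v + P *m z by rewrite /cgc mulmxBl mul1mx !mulmxA subrK.
rewrite [in X in _ <= X]vE form_sqrD // (form_sym _ (P *m z)) // cgc_orth.
by rewrite mulr0 addr0 lerDl.
Qed.

Lemma two_grid_contraction d omega eta0 eta v :
  (forall x, 0 <= form A x x) -> 0 < d -> Dg A = d%:M ->
  (forall a, eigenvalue (invmx (Dg A) *m A) a -> a <= eta0) ->
  0 <= eta -> eta <= 4 -> eta <= omega * (2 - omega * eta0) ->
  (forall u, exists ec, vdot (u - P *m ec) (u - P *m ec) <= 4 / d * form A u u) ->
  form A (Kjac omega A *m (cgc A Rr P *m v)) (Kjac omega A *m (cgc A Rr P *m v))
    <= (1 - eta / 4) * form A v v.
Proof.
move=> Apsd d0 DA Aeta0 eta_ge0 eta_le4 eta_le approx.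
set u := cgc A Rr P *m v; have [ec approx_u] := approx u.
have u_le : form A u u <= 4 / d * vdot (A *m u) (A *m u).
  by apply: form_le_approx approx_u => //; [rewrite divr_gt0 | apply: cgc_orth].
have Ku := jacobi_smoothing u Asym d0 DA Aeta0 eta_le.
have : eta / 4 * form A u u <= eta / 4 * (4 / d * vdot (A *m u) (A *m u)).
  by rewrite ler_wpM2l // divr_ge0.
have : (1 - eta / 4) * form A u u <= (1 - eta / 4) * form A v v.
  by rewrite ler_wpM2l ?cgc_energy_le //; lra.
lra.
Qed.

End CoarseGridCorrection.

Lemma opnorm_le_sqrt n (M X : 'M[R]_n) c :
  0 <= c -> (forall v, form M (X *m v) (X *m v) <= c * form M v v) ->
  opnorm M X <= Num.sqrt c.
Proof.
move=> c0 Xc; apply: ge_sup.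
  by exists (mnorm M (X *m 0)), 0; rewrite /mnorm /form trmx0 !mul0mx mxE sqrtr0 ler01.
move=> _ [v [v1 ->]]; rewrite /mnorm -/(form _ _ _) -/(form _ v v) in v1 *.
apply: (le_trans (ler_wsqrtr (Xc v))); rewrite sqrtrM //.
by rewrite -[X in _ <= X]mulr1 ler_wpM2l ?sqrtr_ge0.
Qed.

End TwoGrid.

(* Case split on every [if] of the goal, discarding the branches whose index
   constraints [lia] refutes. *)
Ltac case_ifs := repeat match goal with |- context [if ?c then _ else _] =>
  let H := fresh "H" in case: (boolP c) => H;
  [rewrite ?H /= | rewrite ?(negbTE H) /=]; try (exfalso; lia) end.

Section Model.
Variable R : realType.
Implicit Types (k : nat) (a b : R).

(* [Bmx k] is B_h with N = 2^k: N times the mass matrix tridiag(1/6, 2/3, 1/6)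
   of the unit mesh, minus the all-ones matrix. *)
Definition mass_coef (i j : nat) : R :=
  if i == j then 2 / 3 else if (i == j.+1) || (j == i.+1) then 1 / 6 else 0.

Definition Bmx k : 'M[R]_(2 ^ k - 1) := \matrix_(i, j) ((2 ^ k)%:R * mass_coef i j - 1).

Lemma Afine_Bmx b k : Afine b k = (b / (2 ^ k)%:R) ^+ 2 *: Bmx k.
Proof. by apply/matrixP => i j; rewrite !mxE /mass_coef -val_eqE /=; case_ifs; lra. Qed.

Lemma sum_ord_pick n (F : nat -> R) x :
  (x < n)%N -> \sum_(j < n) (if (j : nat) == x then F j else 0) = F x.
Proof. by move=> xn; rewrite -big_mkcond big_ord1_eq xn. Qed.

Lemma restr_sum k (i : 'I_(2 ^ k - 1)) (G : nat -> R) :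
  \sum_j restr R k i j * G j = G (2 * i)%N / 4 + G (2 * i).+1 / 2 + G (2 * i).+2 / 4.
Proof.
have i_lt := ltn_ord i; have e2k : (2 ^ k.+1 = 2 * 2 ^ k)%N by rewrite expnS.
have rG (j : 'I_(2 ^ k.+1 - 1)) : restr R k i j * G j =
    (if (j : nat) == (2 * i)%N then G j / 4 else 0)
  + (if (j : nat) == (2 * i).+1 then G j / 2 else 0)
  + (if (j : nat) == (2 * i).+2 then G j / 4 else 0).
  by rewrite mxE; case_ifs; ring.
rewrite (eq_bigr _ (fun j _ => rG j)) !big_split /=.
by rewrite !(sum_ord_pick (fun j => G j / 4)) ?(sum_ord_pick (fun j => G j / 2)) //; lia.
Qed.

Lemma coarsen_Bmx k : coarsen (Bmx k.+1) = 2 *: Bmx k.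
Proof.
apply/matrixP => i l; rewrite /coarsen /prolong mxE.
pose G (x y : nat) : R := (2 ^ k.+1)%:R * mass_coef x y - 1.
have Pml m : (2 *: (restr R k)^T) m l = 2 * restr R k l m by rewrite !mxE.
have RBim m : (restr R k *m Bmx k.+1) i m = \sum_j restr R k i j * G j m.
  by rewrite mxE; apply: eq_bigr => j _; rewrite [Bmx _ _ _]mxE.
under eq_bigr => m _ do rewrite Pml RBim (restr_sum i (G^~ m)) mulrC [2 * _]mulrC -mulrA.
rewrite (restr_sum l (fun y => 2 * (G (2 * i)%N y / 4 + G (2 * i).+1 y / 2 + G (2 * i).+2 y / 4))).
rewrite !mxE /G expnS natrM /mass_coef /=.
by case_ifs; lra.
Qed.

Lemma coarsenZ k a (M : 'M[R]_(2 ^ k.+1 - 1)) : coarsen (a *: M) = a *: coarsen M.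
Proof. by rewrite /coarsen -(scalemxAr a (restr R k) M) -scalemxAl. Qed.

Lemma Aup_Bmx b m k :
  Aup b m k = ((2 ^ m)%:R * (b / (2 ^ (k + m))%:R) ^+ 2) *: Bmx k.
Proof.
elim: m k => [|m IH] k /=; first by rewrite Afine_Bmx addn0 mul1r.
rewrite IH coarsenZ coarsen_Bmx scalerA addSnnS expnS natrM; congr (_ *: _); ring.
Qed.

Lemma Alev_Bmx b q k : 0 < b -> exists2 a : R, 0 < a & Alev b q k = a *: Bmx k.
Proof.
move=> b0; rewrite /Alev Aup_Bmx; eexists; last reflexivity.
by rewrite mulr_gt0 ?exprn_gt0 ?divr_gt0 // ltr0n expn_gt0.
Qed.

Lemma Alev_coarsen b q k : (k < q)%N -> Alev b q k = coarsen (Alev b q k.+1).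
Proof. by move=> kq; rewrite /Alev -(subnSK kq). Qed.

(* The nodal values 0, e_0, ..., e_(n-1), 0, 0, ... of [e] extended by the
   zero exterior condition: [ext e j] is the value at mesh node j. *)
Definition ext n (e : 'cV[R]_n) (j : nat) : R :=
  if j is j'.+1 then oapp (fun i : 'I_n => e i 0) 0 (insub j') else 0.

Lemma ext_ord n (e : 'cV_n) (i : 'I_n) : ext e i.+1 = e i 0.
Proof. by rewrite /= valK. Qed.

Lemma ext_out n (e : 'cV_n) j : (n <= j)%N -> ext e j.+1 = 0.
Proof. by move=> nj; rewrite /= insubF // ltnNge nj. Qed.

Lemma extB n (u v : 'cV_n) j : ext (u - v) j = ext u j - ext v j.
Proof. by case: j => [|j] /=; [rewrite subr0 | case: insub => [i|] /=; rewrite ?mxE ?subr0]. Qed.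

Lemma vdot_ext n (e : 'cV_n) : vdot e e = \sum_(0 <= j < n.+1) ext e j ^+ 2.
Proof.
rewrite vdotE big_nat_recl // expr0n add0r big_mkord.
by apply: eq_bigr => i _; rewrite ext_ord expr2.
Qed.

Lemma sum_ext_pick n (e : 'cV_n) x :
  \sum_(j < n) (if (j : nat) == x then e j 0 else 0) = ext e x.+1.
Proof.
under eq_bigr => j _ do rewrite -ext_ord.
rewrite -big_mkcond (big_ord1_eq _ (fun j => ext e j.+1)).
by case: ltnP => // /ext_out ->.
Qed.

Lemma sum_ext_pick_prev n (e : 'cV_n) x :
  \sum_(j < n) (if (j.+1 == x)%N then e j 0 else 0) = ext e x.
Proof. by case: x => [|x]; [rewrite big1 | under eq_bigr do rewrite eqSS; apply: sum_ext_pick]. Qed.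

Lemma Bmx_mulE k (e : 'cV_(2 ^ k - 1)) (i : 'I_(2 ^ k - 1)) :
  (Bmx k *m e) i 0 = (2 ^ k)%:R * (ext e i / 6 + 2 / 3 * ext e i.+1 + ext e i.+2 / 6)
                     - \sum_j e j 0.
Proof.
have mc (j : 'I_(2 ^ k - 1)) : mass_coef i j * e j 0 =
    (if (j.+1 == i)%N then e j 0 else 0) / 6
  + 2 / 3 * (if (j : nat) == i then e j 0 else 0)
  + (if (j : nat) == i.+1 then e j 0 else 0) / 6.
  by rewrite /mass_coef; case_ifs; ring.
rewrite mxE; under eq_bigr => j _ do rewrite mxE mulrBl mul1r -mulrA mc.
by rewrite sumrB -mulr_sumr !big_split /= -mulr_sumr -!mulr_suml sum_ext_pick_prev !sum_ext_pick.
Qed.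

(* The integral over [0, 1] of the square of the affine function from x to y. *)
Definition elem_energy (x y : R) : R := (x ^+ 2 + x * y + y ^+ 2) / 3.

Lemma elem_energy_ge0 x y : 0 <= elem_energy x y.
Proof.
by rewrite /elem_energy; have := sqr_ge0 (x + y / 2); have := sqr_ge0 y; lra.
Qed.

Lemma elem_energy_eq0 x y : elem_energy x y = 0 -> x = 0 /\ y = 0.
Proof.
rewrite /elem_energy => E0.
have := sqr_ge0 x; have := sqr_ge0 y; have := sqr_ge0 (x + y).
by split; apply/eqP; rewrite -sqrf_eq0 eq_le sqr_ge0 andbT; lra.
Qed.

Lemma midpoint_err_le_energy c x m y :
  (m - (x + y) / 2) ^+ 2 / 6 <= elem_energy (x - c) (m - c) + elem_energy (m - c) (y - c).
Proof.
rewrite /elem_energy; have := sqr_ge0 (x - y); have := sqr_ge0 (x + y + 2 * m - 4 * c).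
lra.
Qed.

Lemma sum_elem_energy (x : nat -> R) c n :
  \sum_(0 <= i < n.+1) elem_energy (x i - c) (x i.+1 - c) =
    \sum_(0 <= i < n) x i.+1 * (x i / 6 + 2 / 3 * x i.+1 + x i.+2 / 6)
  - 2 * c * \sum_(0 <= i < n) x i.+1 + n.+1%:R * c ^+ 2
  + ((x 0 ^+ 2 + x n.+1 ^+ 2) / 3 + (x 0 * x 1 + x n * x n.+1) / 6 - c * (x 0 + x n.+1)).
Proof.
elim: n => [|n IH]; first by rewrite !big_nat1 !big_geq // /elem_energy; field.
rewrite big_nat_recr //= IH !big_nat_recr //= /elem_energy.
by rewrite -[n.+2]addn1 -[n.+1]addn1 !natrD; field.
Qed.

Lemma big_nat_pairs (g : nat -> R) m n : m = (2 * n)%N ->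
  \sum_(0 <= i < m) g i = \sum_(0 <= i < n) (g (2 * i)%N + g (2 * i).+1).
Proof.
move=> ->; elim: n => [|n IH]; first by rewrite muln0 !big_geq.
by rewrite mulnS !big_nat_recr //= IH addrA.
Qed.

(* The form is 2^k times the integral of (u - c)^2 over [0, 2^k], where u is the
   piecewise linear interpolant of [ext e] and c is its mean. *)
Lemma form_Bmx k (e : 'cV_(2 ^ k - 1)) (c := (\sum_j e j 0) / (2 ^ k)%:R) :
  form (Bmx k) e e
    = (2 ^ k)%:R * \sum_(0 <= i < 2 ^ k) elem_energy (ext e i - c) (ext e i.+1 - c).
Proof.
have N0 : (2 ^ k)%:R != 0 :> R by rewrite pnatr_eq0 -lt0n expn_gt0.
have Sext : \sum_j e j 0 = \sum_(0 <= i < 2 ^ k - 1) ext e i.+1.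
  by rewrite big_mkord; apply: eq_bigr => i _; rewrite ext_ord.
have pow2S : ((2 ^ k - 1).+1 = 2 ^ k)%N by rewrite subn1 prednK // expn_gt0.
have -> : \sum_(0 <= i < 2 ^ k) elem_energy (ext e i - c) (ext e i.+1 - c)
    = \sum_(0 <= i < (2 ^ k - 1).+1) elem_energy (ext e i - c) (ext e i.+1 - c).
  by rewrite pow2S.
rewrite sum_elem_energy ext_out // pow2S.
rewrite /form -mulmxA mxE /c.
under eq_bigr => i _ do rewrite [_^T 0 i]mxE Bmx_mulE -ext_ord mulrBr mulrCA.
by rewrite sumrB -mulr_sumr -mulr_suml Sext !big_mkord /=; field.
Qed.

Lemma form_Bmx_ge0 k (e : 'cV_(2 ^ k - 1)) : 0 <= form (Bmx k) e e.
Proof. by rewrite form_Bmx mulr_ge0 ?sumr_ge0 // => i _; apply: elem_energy_ge0. Qed.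

Lemma form_Bmx_eq0 k (e : 'cV_(2 ^ k - 1)) : form (Bmx k) e e = 0 -> e = 0.
Proof.
rewrite form_Bmx; set c := _ / _ => /eqP; rewrite mulf_eq0 pnatr_eq0 expn_eq0 /=.
rewrite big_mkord psumr_eq0 => [/allP E0|i _]; last exact: elem_energy_ge0.
have {}E0 (i : nat) : (i < 2 ^ k)%N -> ext e i - c = 0 /\ ext e i.+1 - c = 0.
  by move=> ik; apply/elem_energy_eq0/eqP/(E0 (Ordinal ik))/mem_index_enum.
have c0 : c = 0 by have [/= + _] := E0 0%N (expn_gt0 2 k); rewrite sub0r => /eqP; rewrite oppr_eq0 => /eqP.
apply/matrixP => i j; rewrite ord1 mxE -ext_ord.
have [_ /eqP] := E0 i (leq_trans (ltn_ord i) (leq_subr 1 _)).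
by rewrite c0 subr0 => /eqP.
Qed.

Lemma Bmx_sym k : (Bmx k)^T = Bmx k.
Proof. by apply/matrixP => i j; rewrite !mxE /mass_coef; case_ifs. Qed.

Lemma prolong_mulE k (w : 'cV_(2 ^ k - 1)) (j : 'I_(2 ^ k.+1 - 1)) :
  (prolong R k *m w) j 0
    = if odd j then ext w (j./2).+1 else (ext w j./2 + ext w (j./2).+1) / 2.
Proof.
set m := j./2; have jm : nat_of_ord j = (2 * m + odd j)%N.
  by rewrite addnC mul2n odd_double_half.
rewrite mxE; case: (odd j) jm => /= jm.
  have Pw i : prolong R k j i * w i 0 = if (i : nat) == m then w i 0 else 0.
    by rewrite !mxE; case_ifs; lra.
  by rewrite (eq_bigr _ (fun i _ => Pw i)) sum_ext_pick.
have Pw i : prolong R k j i * w i 0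
    = ((if (i.+1 == m)%N then w i 0 else 0) + (if (i : nat) == m then w i 0 else 0)) / 2.
  by rewrite !mxE; case_ifs; lra.
by rewrite (eq_bigr _ (fun i _ => Pw i)) -mulr_suml big_split sum_ext_pick_prev sum_ext_pick.
Qed.

Lemma ext_prolong k (w : 'cV_(2 ^ k - 1)) m :
  ext (prolong R k *m w) (2 * m) = ext w m
  /\ ext (prolong R k *m w) (2 * m).+1 = (ext w m + ext w m.+1) / 2.
Proof.
have nf : (2 ^ k.+1 - 1 = (2 * (2 ^ k - 1)).+1)%N by rewrite expnS; have := expn_gt0 2 k; lia.
have half2 j : ((2 * j)./2 = j)%N by rewrite mul2n doubleK.
have odd2 j : odd (2 * j) = false by rewrite mul2n odd_double.
split.
  case: m => [|m]; first by rewrite muln0.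
  rewrite mulnS; case: (ltnP (2 * m).+1 (2 ^ k.+1 - 1)) => [lt | ge].
    by rewrite (ext_ord _ (Ordinal lt)) prolong_mulE /= odd2 uphalf_half odd2 half2.
  by rewrite !ext_out //; lia.
case: (ltnP (2 * m) (2 ^ k.+1 - 1)) => [lt | ge].
  by rewrite (ext_ord _ (Ordinal lt)) prolong_mulE /= odd2 half2.
case: m ge => [|m] ge; first lia.
by rewrite !ext_out ?addr0 ?mul0r //; lia.
Qed.

(* Coarse node i is fine node 2i + 1, i.e. mesh node 2i + 2. *)
Definition injection k (u : 'cV[R]_(2 ^ k.+1 - 1)) : 'cV[R]_(2 ^ k - 1) :=
  \col_i ext u (2 * i).+2.

Lemma ext_injection k (u : 'cV_(2 ^ k.+1 - 1)) m : ext (injection u) m = ext u (2 * m).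
Proof.
case: m => [|m]; first by rewrite muln0.
rewrite mulnS; case: (ltnP m (2 ^ k - 1)) => [lt | ge].
  by rewrite (ext_ord _ (Ordinal lt)) mxE.
by rewrite !ext_out // expnS; lia.
Qed.

Lemma vdot_injection_residual k (u : 'cV_(2 ^ k.+1 - 1))
    (r := u - prolong R k *m injection u) :
  vdot r r = \sum_(0 <= i < 2 ^ k) (ext u (2 * i).+1 - (ext u (2 * i) + ext u (2 * i).+2) / 2) ^+ 2.
Proof.
have pow2S : ((2 ^ k.+1 - 1).+1 = 2 * 2 ^ k)%N.
  by rewrite expnS; have := expn_gt0 2 k; lia.
rewrite vdot_ext (big_nat_pairs _ pow2S); apply: eq_bigr => i _.
have [Pe Po] := ext_prolong (injection u) i.
by rewrite !extB Pe Po !ext_injection subrr expr0n add0r mulnS.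
Qed.

Definition bdiag k : R := (2 ^ k)%:R * (2 / 3) - 1.

Lemma Bmx_approx k (u : 'cV_(2 ^ k.+1 - 1)) (r := u - prolong R k *m injection u) :
  bdiag k.+1 * vdot r r <= 4 * form (Bmx k.+1) u u.
Proof.
rewrite form_Bmx; set c := _ / _; set E := \sum_(0 <= i < _) _.
have rE : vdot r r / 6 <= E.
  rewrite vdot_injection_residual /E (big_nat_pairs _ (expnS 2 k)) mulr_suml.
  by apply: ler_sum => i _; apply: midpoint_err_le_energy.
have : (2 ^ k.+1)%:R * (vdot r r / 6) <= (2 ^ k.+1)%:R * E by rewrite ler_wpM2l.
by have := vdot_ge0 r; rewrite /bdiag; lra.
Qed.

Lemma bdiag_gt0 k : (1 <= k)%N -> 0 < bdiag k.
Proof.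
move=> k1; have : (2 : R) <= (2 ^ k)%:R by rewrite ler_nat -{1}(expn1 2) leq_pexp2l.
by rewrite /bdiag; lra.
Qed.

Lemma scaled_Bmx_props a k (A := a *: Bmx k) : 0 < a -> (1 <= k)%N ->
  [/\ A^T = A, forall x, 0 <= form A x x, 0 < a * bdiag k & Dg A = (a * bdiag k)%:M].
Proof.
move=> a0 k1; split; first by rewrite linearZ /= Bmx_sym.
- by move=> x; rewrite form_scale mulr_ge0 ?form_Bmx_ge0 ?ltW.
- by rewrite mulr_gt0 ?bdiag_gt0.
by apply/matrixP => i j; rewrite !mxE /mass_coef eqxx; case: eqP; rewrite ?mulr0.
Qed.

Lemma scaled_Bmx_coarse_unit a k : a != 0 ->
  restr R k *m (a *: Bmx k.+1) *m prolong R k \in unitmx.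
Proof.
move=> a_nz; rewrite -[_ *m _ *m _]/(coarsen _) coarsenZ coarsen_Bmx scalerA.
rewrite unitmxZ ?unitfE ?mulf_neq0 ?pnatr_eq0 //; apply: form_pd_unitmx; exact: form_Bmx_eq0.
Qed.

Lemma scaled_Bmx_approx a k (u : 'cV_(2 ^ k.+1 - 1)) : 0 < a ->
  exists ec, vdot (u - prolong R k *m ec) (u - prolong R k *m ec)
             <= 4 / (a * bdiag k.+1) * form (a *: Bmx k.+1) u u.
Proof.
move=> a0; exists (injection u); have b0 := bdiag_gt0 (ltn0Sn k).
rewrite form_scale (_ : 4 / _ * _ = 4 * form (Bmx k.+1) u u / bdiag k.+1).
  by rewrite ler_pdivlMr // mulrC Bmx_approx.
by field; rewrite !gt_eqF.
Qed.

End Model.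

Theorem mainTheorem10 (R : realType) (q : nat) (b eta0 omega eta : R) :
  (2 <= q)%N -> 0 < b ->
  (forall k : nat, (1 <= k <= q)%N ->
     forall a : R,
       eigenvalue (invmx (Dg (Alev b q k)) *m Alev b q k) a -> a <= eta0) ->
  eta0 < 3 ->
  0 < omega -> omega < 2 / eta0 ->
  0 < eta -> eta <= omega * (2 - omega * eta0) ->
  (forall k : nat, (1 <= k <= q)%N ->
     forall v : 'cV[R]_(2 ^ k - 1),
       mnorm (Alev b q k) (Kjac omega (Alev b q k) *m v) ^+ 2
       <= mnorm (Alev b q k) v ^+ 2
          - eta * mnorm (invmx (Dg (Alev b q k))) (Alev b q k *m v) ^+ 2)
  /\
  (forall k : nat, (1 <= k)%N -> (k.+1 <= q)%N ->
     opnorm (Alev b q k.+1)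
            (Kjac omega (Alev b q k.+1) *m Tcgc b q k)
       <= Num.sqrt (1 - eta / 4)
     /\ Num.sqrt (1 - eta / 4) < 1).
Proof.
move=> _ b0 Aeta0 _ _ _ eta_gt0 eta_le; split.
  move=> k kq v; have [a a0 Ak] := Alev_Bmx q k b0.
  have := Aeta0 k kq; rewrite Ak => Aeta0k; have [k1 _] := andP kq.
  have [Asym Apsd d0 DA] := scaled_Bmx_props a0 k1.
  exact: jacobi_smoothing_mnorm Asym Apsd d0 DA Aeta0k eta_le.
move=> k _ kq; have [a a0 Ak] := Alev_Bmx q k.+1 b0.
have := Aeta0 k.+1 kq; rewrite Ak => Aeta0k.
have [Asym Apsd d0 DA] := scaled_Bmx_props a0 (ltn0Sn k).
have n_gt0 : (0 < 2 ^ k.+1 - 1)%N by rewrite expnS; have := expn_gt0 2 k; lia.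
have eta0_ge1 := jacobi_eigen_bound_ge1 (Ordinal n_gt0) Asym (lt0r_neq0 d0) DA Aeta0k.
have eta_le1 := le_trans eta_le (jacobi_rate_le1 omega eta0_ge1).
split; last by rewrite -[X in _ < X]sqrtr1 ltr_sqrt ?ltr01 //; lra.
rewrite /Tcgc (Alev_coarsen b kq) Ak; apply: opnorm_le_sqrt => [|v]; first lra.
have PRr : (prolong R k)^T = 2 *: restr R k by rewrite linearZ /= trmxK.
rewrite -mulmxA; apply: (two_grid_contraction Asym PRr _ v Apsd d0 DA Aeta0k) => //.
- exact/scaled_Bmx_coarse_unit/lt0r_neq0.
- exact: ltW.
- lra.
- by move=> u; apply: scaled_Bmx_approx.
Qed.
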